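(* For every equation $u_t+uu_x=A^2(t,x)u_{xx}+A^1(t,x)u_x$ of the class $\hat{\mathcal L}_1$, its maximal Lie invariance algebra has dimension at most $2$.
   Context: All functions are smooth. $\hat{\mathcal L}_1$ is the class of equations $u_t+uu_x=A^2(t,x)u_{xx}+A^1(t,x)u_x$ for $u(t,x)$ with smooth arbitrary elements $A^1,A^2$ satisfying $A^2\neq0$ and $A^1_{xx}\neq0$ (superscripts are indices). The maximal Lie invariance algebra is the algebra of all vector fields on $(t,x,u)$ generating one-parameter groups of point symmetries of the equation. *)

From Stdlib Require Import Reals.
From Coquelicot Require Import Coquelicot.
Open Scope R_scope.

Definition d1 (f : R -> R -> R -> R) : R -> R -> R -> R :=
  fun t x u => Derive (fun s => f s x u) t.
Definition d2 (f : R -> R -> R -> R) : R -> R -> R -> R :=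
  fun t x u => Derive (fun s => f t s u) x.
Definition d3 (f : R -> R -> R -> R) : R -> R -> R -> R :=
  fun t x u => Derive (fun s => f t x s) u.
Definition e1 (f : R -> R -> R) : R -> R -> R :=
  fun t x => Derive (fun s => f s x) t.
Definition e2 (f : R -> R -> R) : R -> R -> R :=
  fun t x => Derive (fun s => f t s) x.

Fixpoint iterD3 (l : list nat) (f : R -> R -> R -> R) : R -> R -> R -> R :=
  match l with
  | nil => f
  | cons O l' => d1 (iterD3 l' f)
  | cons (S O) l' => d2 (iterD3 l' f)
  | cons _ l' => d3 (iterD3 l' f)
  end.
Fixpoint iterD2 (l : list bool) (f : R -> R -> R) : R -> R -> R :=
  match l with
  | nil => f
  | cons true l' => e1 (iterD2 l' f)
  | cons false l' => e2 (iterD2 l' f)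
  end.

Definition smooth3 (f : R -> R -> R -> R) : Prop :=
  forall (l : list nat) (t x u : R),
    ex_derive (fun s => iterD3 l f s x u) t /\
    ex_derive (fun s => iterD3 l f t s u) x /\
    ex_derive (fun s => iterD3 l f t x s) u /\
    continuous (fun p : R * R * R => iterD3 l f (fst (fst p)) (snd (fst p)) (snd p))
               (t, x, u).
Definition smooth2 (f : R -> R -> R) : Prop :=
  forall (l : list bool) (t x : R),
    ex_derive (fun s => iterD2 l f s x) t /\
    ex_derive (fun s => iterD2 l f t s) x /\
    continuous (fun p : R * R => iterD2 l f (fst p) (snd p)) (t, x).

(** A vector field  tau d_t + xi d_x + eta d_u  on (t,x,u)-space. *)
Record vfield := VF {
  vtau : R -> R -> R -> R;
  vxi  : R -> R -> R -> R;
  veta : R -> R -> R -> R }.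

Definition in_class_L1hat (A1 A2 : R -> R -> R) : Prop :=
  smooth2 A1 /\ smooth2 A2 /\
  (forall t x, A2 t x <> 0) /\
  (forall t x, e2 (e2 A1) t x <> 0).

(** Infinitesimal invariance criterion for
      u_t + u u_x = A2(t,x) u_xx + A1(t,x) u_x :
    the second prolongation of Q applied to
      Delta = u_t + u u_x - A2 u_xx - A1 u_x
    vanishes on the manifold Delta = 0 of the second-order jet space
    (jet coordinates t,x,u,u_x,u_tx,u_xx free, u_t = A2 u_xx + A1 u_x - u u_x;
    u_tt does not occur). *)
Definition invariance_condition (A1 A2 : R -> R -> R) (Q : vfield) : Prop :=
  forall t x u ux utx uxx : R,
    let ut := A2 t x * uxx + A1 t x * ux - u * ux in
    let tau := vtau Q in let xi := vxi Q in let eta := veta Q in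
    let Dt f := d1 f t x u + ut * d3 f t x u in
    let Dx f := d2 f t x u + ux * d3 f t x u in
    let Dxx f := d2 (d2 f) t x u + 2 * ux * d2 (d3 f) t x u
                 + uxx * d3 f t x u + ux ^ 2 * d3 (d3 f) t x u in
    let eta_t := Dt eta - ut * Dt tau - ux * Dt xi in
    let eta_x := Dx eta - ut * Dx tau - ux * Dx xi in
    let eta_xx := Dxx eta - ut * Dxx tau - 2 * utx * Dx tau
                  - ux * Dxx xi - 2 * uxx * Dx xi in
    eta_t + eta t x u * ux + u * eta_x
    - (tau t x u * e1 A2 t x + xi t x u * e2 A2 t x) * uxx
    - A2 t x * eta_xx
    - (tau t x u * e1 A1 t x + xi t x u * e2 A1 t x) * ux
    - A1 t x * eta_x = 0.

Definition lie_symmetry (A1 A2 : R -> R -> R) (Q : vfield) : Prop :=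
  smooth3 (vtau Q) /\ smooth3 (vxi Q) /\ smooth3 (veta Q) /\
  invariance_condition A1 A2 Q.

(** A (real vector) space S of vector fields has dimension at most n:
    any n+1 elements of S are linearly dependent over R. *)
Definition dim_at_most (S : vfield -> Prop) (n : nat) : Prop :=
  forall Q : nat -> vfield, (forall i, (i <= n)%nat -> S (Q i)) ->
  exists c : nat -> R,
    (exists i, (i <= n)%nat /\ c i <> 0) /\
    forall t x u,
      sum_f_R0 (fun i => c i * vtau (Q i) t x u) n = 0 /\
      sum_f_R0 (fun i => c i * vxi (Q i) t x u) n = 0 /\
      sum_f_R0 (fun i => c i * veta (Q i) t x u) n = 0.

From Stdlib Require Import Reals Lra Psatz Classical.
From Coquelicot Require Import Coquelicot.
Open Scope R_scope.

(* A Lie symmetry [tau d_t + xi d_x + eta d_u] is read off the invariance condition, a polynomial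
   identity in the jet variables.  Its coefficients force [tau = T(t)], [xi = P(t) + (T'(t) + c) x]
   and [eta = c u + a] with constants [c], [a] (this is where [A1_xx <> 0] is used), subject to the
   classifying equations
     [A2 (T' + 2 c) = T A2_t + xi A2_x]   and   [a = P' + T'' x - c A1 + T A1_t + xi A1_x].
   These are linear in [(T, P, c, a)], so it suffices to find a time [t0] at which [T(t0) = 0] and
   [c = 0] force the whole datum to vanish: two linear conditions then make any three symmetries
   dependent.  If [A2_x <> 0] at some [(t0, x0)], the equations give [T'(t0) = P(t0) = 0] and [a = 0],
   and [(T, T', P)] solves a linear ODE, so it vanishes by Gronwall's argument.  If [A2] does not
   depend on [x], then [T / A2] is constant in [t], hence [T = 0], and then [P = 0] and [a = 0]. *)

Lemma Rmult_eq0_reg_l (k y : R) : k <> 0 -> k * y = 0 -> y = 0.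
Proof. intros Hk H; destruct (Rmult_integral _ _ H); [contradiction | assumption]. Qed.

Lemma quadratic_coefs_eq0 (a b c : R) :
  (forall y, a + b * y + c * y ^ 2 = 0) -> a = 0 /\ b = 0 /\ c = 0.
Proof.
  intros H; pose proof (H 0); pose proof (H 1); pose proof (H (-1)); repeat split; lra.
Qed.

(* [auto_derive] produces [Derive (fun s => f s)], which [rewrite] does not match with [Derive f]. *)
Lemma Derive_of_is_derive (f : R -> R) (y l : R) : is_derive f y l -> Derive (fun s => f s) y = l.
Proof. apply is_derive_unique. Qed.

Lemma Derive_of_const (f : R -> R) (k y : R) : (forall s, f s = k) -> Derive f y = 0.
Proof. intros H; rewrite (Derive_ext _ _ _ H); apply Derive_const. Qed.

Lemma is_derive_of_const (f : R -> R) (k y l : R) : (forall s, f s = k) -> is_derive f y l -> l = 0.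
Proof. intros H D; rewrite <- (is_derive_unique _ _ _ D); exact (Derive_of_const f k y H). Qed.

Lemma affine_of_Derive_const (f : R -> R) (k : R) :
  (forall y, ex_derive f y) -> (forall y, Derive f y = k) -> forall y, f y = f 0 + k * y.
Proof.
  intros Hd Hk y.
  assert (Hg : forall z, is_derive (fun s => f s - k * s) z 0).
  { intro z; auto_derive; [apply Hd | rewrite Hk; ring]. }
  destruct (MVT_gen (fun s => f s - k * s) 0 y (fun _ => 0)) as [c [_ Hc]].
  - intros z _; apply Hg.
  - intros z _; apply continuity_pt_filterlim.
    apply (ex_derive_continuous (fun s => f s - k * s)); exists 0; apply Hg.
  - lra.
Qed.

Lemma const_of_Derive_eq0 (f : R -> R) :
  (forall y, ex_derive f y) -> (forall y, Derive f y = 0) -> forall y, f y = f 0.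
Proof. intros Hd H y; rewrite (affine_of_Derive_const f 0 Hd H y); ring. Qed.

Lemma Derive_affine (a b : R -> R) (x y : R) :
  ex_derive a y -> ex_derive b y ->
  Derive (fun s => a s + b s * x) y = Derive a y + Derive b y * x.
Proof.
  intros Ha Hb; apply is_derive_unique; auto_derive.
  - repeat split; assumption.
  - rewrite !Rmult_1_l; reflexivity.
Qed.

Lemma Derive_affine_shift (a b : R -> R) (k x y : R) :
  ex_derive a y -> ex_derive b y ->
  Derive (fun s => a s + (b s + k) * x) y = Derive a y + Derive b y * x.
Proof.
  intros Ha Hb; apply is_derive_unique; auto_derive.
  - repeat split; assumption.
  - rewrite !Rmult_1_l; reflexivity.
Qed.

Lemma affine_relation_coef_eq0 (F : R -> R) (k0 k1 m y0 : R) :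
  (forall y, ex_derive F y) -> (forall y, ex_derive (Derive F) y) -> Derive (Derive F) y0 <> 0 ->
  (forall y, k0 + k1 * y + m * F y = 0) -> m = 0.
Proof.
  intros HF HF' Hnz H.
  assert (D1 : forall y, k1 + m * Derive F y = 0).
  { intro y; apply (is_derive_of_const (fun y => k0 + k1 * y + m * F y) 0 y); [exact H|].
    auto_derive; [apply HF | change (Derive (fun x => F x) y) with (Derive F y); ring]. }
  assert (D2 : m * Derive (Derive F) y0 = 0).
  { apply (is_derive_of_const (fun y => k1 + m * Derive F y) 0 y0); [exact D1|].
    auto_derive; [apply HF' | change (Derive (fun x => Derive F x) y0) with (Derive (Derive F) y0); ring]. }
  rewrite Rmult_comm in D2; exact (Rmult_eq0_reg_l _ _ Hnz D2).
Qed.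

Lemma gronwall_forward (N dN : R -> R) (K t0 t1 : R) :
  t0 <= t1 -> (forall s, is_derive N s (dN s)) -> (forall s, 0 <= N s) ->
  (forall s, t0 <= s <= t1 -> dN s <= K * N s) -> N t0 = 0 -> N t1 = 0.
Proof.
  intros Hle HN Hpos Hb H0.
  set (w := fun s => exp (- K * (s - t0))).
  assert (Hg : forall s, is_derive (fun s => N s * w s) s ((dN s - K * N s) * w s)).
  { intro s; unfold w; auto_derive.
    - exists (dN s); apply HN.
    - rewrite (Derive_of_is_derive _ _ _ (HN s)); unfold Rminus; ring. }
  destruct (MVT_gen (fun s => N s * w s) t0 t1 _ (fun s _ => Hg s)) as [c [Hc Hmvt]].
  { intros s _; apply continuity_pt_filterlim.
    apply (ex_derive_continuous (fun s => N s * w s)); eexists; apply Hg. }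
  rewrite Rmin_left, Rmax_right in Hc by exact Hle.
  rewrite H0, Rmult_0_l, Rminus_0_r in Hmvt.
  assert (Hw : forall s, 0 < w s) by (intro; apply exp_pos).
  pose proof (Hb c Hc); pose proof (Hw c); pose proof (Hw t1); pose proof (Hpos t1).
  assert (N t1 * w t1 <= 0) by (rewrite Hmvt; apply Rmult_le_0_r; [nra | lra]).
  nra.
Qed.

(* The backward case reduces to the forward one by reflecting time. *)
Lemma gronwall_zero (N dN : R -> R) (K t0 t1 : R) :
  (forall s, is_derive N s (dN s)) -> (forall s, 0 <= N s) ->
  (forall s, Rmin t0 t1 <= s <= Rmax t0 t1 -> Rabs (dN s) <= K * N s) ->
  N t0 = 0 -> N t1 = 0.
Proof.
  intros HN Hpos Hb H0.
  destruct (Rle_dec t0 t1) as [Hle | Hlt].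
  - apply (gronwall_forward N dN K t0 t1 Hle HN Hpos); [|exact H0].
    intros s Hs; eapply Rle_trans; [apply Rle_abs | apply Hb].
    rewrite Rmin_left, Rmax_right; lra.
  - rewrite <- (Ropp_involutive t1).
    apply (gronwall_forward (fun s => N (- s)) (fun s => - dN (- s)) K (- t0) (- t1)); [lra | | | |].
    + intro s; auto_derive.
      * exists (dN (- s)); apply HN.
      * rewrite (Derive_of_is_derive _ _ _ (HN (- s))); ring.
    + intro s; apply Hpos.
    + intros s Hs; eapply Rle_trans; [apply Rle_abs | rewrite Rabs_Ropp; apply Hb].
      rewrite Rmin_right, Rmax_left; lra.
    + rewrite Ropp_involutive; exact H0.
Qed.

Lemma sum_sq_derive_bound (y1 y2 y3 z1 z2 z3 K : R) : 0 <= K ->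
  Rabs z1 + Rabs z2 + Rabs z3 <= K * (Rabs y1 + Rabs y2 + Rabs y3) ->
  Rabs (2 * (y1 * z1 + y2 * z2 + y3 * z3)) <= 6 * K * (y1 * y1 + y2 * y2 + y3 * y3).
Proof.
  intros HK Hb.
  assert (Htri : Rabs (2 * (y1 * z1 + y2 * z2 + y3 * z3))
                 <= 2 * (Rabs y1 * Rabs z1 + Rabs y2 * Rabs z2 + Rabs y3 * Rabs z3)).
  { rewrite Rabs_mult, Rabs_pos_eq, <- !Rabs_mult by lra.
    pose proof (Rabs_triang (y1 * z1 + y2 * z2) (y3 * z3)); pose proof (Rabs_triang (y1 * z1) (y2 * z2)).
    lra. }
  assert (Hsq : forall y, y * y = Rabs y * Rabs y)
    by (intro y; rewrite <- Rabs_mult; symmetry; apply Rabs_pos_eq, Rle_0_sqr).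
  rewrite (Hsq y1), (Hsq y2), (Hsq y3).
  set (a1 := Rabs y1) in *; set (a2 := Rabs y2) in *; set (a3 := Rabs y3) in *.
  set (b1 := Rabs z1) in *; set (b2 := Rabs z2) in *; set (b3 := Rabs z3) in *.
  assert (0 <= a1) by apply Rabs_pos; assert (0 <= a2) by apply Rabs_pos; assert (0 <= a3) by apply Rabs_pos.
  assert (0 <= b1) by apply Rabs_pos; assert (0 <= b2) by apply Rabs_pos; assert (0 <= b3) by apply Rabs_pos.
  assert (a1 * b1 + a2 * b2 + a3 * b3 <= (a1 + a2 + a3) * (b1 + b2 + b3)) by nra.
  assert ((a1 + a2 + a3) * (b1 + b2 + b3) <= (a1 + a2 + a3) * (K * (a1 + a2 + a3)))
    by (apply Rmult_le_compat_l; lra).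
  assert (K * ((a1 + a2 + a3) * (a1 + a2 + a3)) <= K * (3 * (a1 * a1 + a2 * a2 + a3 * a3)))
    by (apply Rmult_le_compat_l; [lra | pose proof (Rle_0_sqr (a1 - a2)); pose proof (Rle_0_sqr (a1 - a3));
                                        pose proof (Rle_0_sqr (a2 - a3)); unfold Rsqr in *; lra]).
  lra.
Qed.

Lemma ode3_zero (y1 y2 y3 z1 z2 z3 M : R -> R) (t0 : R) :
  (forall t, is_derive y1 t (z1 t)) -> (forall t, is_derive y2 t (z2 t)) ->
  (forall t, is_derive y3 t (z3 t)) -> (forall t, continuity_pt M t) ->
  (forall t, Rabs (z1 t) + Rabs (z2 t) + Rabs (z3 t)
             <= M t * (Rabs (y1 t) + Rabs (y2 t) + Rabs (y3 t))) ->
  y1 t0 = 0 -> y2 t0 = 0 -> y3 t0 = 0 ->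
  forall t, y1 t = 0 /\ y2 t = 0 /\ y3 t = 0.
Proof.
  intros D1 D2 D3 HM Hb Z1 Z2 Z3 t1.
  set (N := fun s => y1 s * y1 s + y2 s * y2 s + y3 s * y3 s).
  set (dN := fun s => 2 * (y1 s * z1 s + y2 s * z2 s + y3 s * z3 s)).
  assert (HN : forall s, is_derive N s (dN s)).
  { intro s; unfold N, dN; auto_derive.
    - repeat split; first [exists (z1 s); apply D1 | exists (z2 s); apply D2 | exists (z3 s); apply D3].
    - rewrite (Derive_of_is_derive _ _ _ (D1 s)), (Derive_of_is_derive _ _ _ (D2 s)),
        (Derive_of_is_derive _ _ _ (D3 s)); ring. }
  destruct (continuity_ab_maj M (Rmin t0 t1) (Rmax t0 t1)) as [m [Hm _]];
    [apply Rmin_Rmax | intros; apply HM |].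
  assert (Hdn : forall s, Rmin t0 t1 <= s <= Rmax t0 t1 -> Rabs (dN s) <= 6 * Rabs (M m) * N s).
  { intros s Hs; apply sum_sq_derive_bound; [apply Rabs_pos |].
    eapply Rle_trans; [apply Hb |]; apply Rmult_le_compat_r.
    - pose proof (Rabs_pos (y1 s)); pose proof (Rabs_pos (y2 s)); pose proof (Rabs_pos (y3 s)); lra.
    - eapply Rle_trans; [apply Hm, Hs | apply Rle_abs]. }
  assert (NT : N t1 = 0).
  { apply (gronwall_zero N dN (6 * Rabs (M m)) t0 t1 HN); [intro s; unfold N; nra | exact Hdn |].
    unfold N; rewrite Z1, Z2, Z3; ring. }
  unfold N in NT; repeat split; nra.
Qed.

Lemma iterD3_d1 l f : iterD3 l (d1 f) = iterD3 (l ++ 0%nat :: nil) f.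
Proof. induction l as [|[|[|a]] l IH]; simpl; try rewrite IH; reflexivity. Qed.
Lemma iterD3_d2 l f : iterD3 l (d2 f) = iterD3 (l ++ 1%nat :: nil) f.
Proof. induction l as [|[|[|a]] l IH]; simpl; try rewrite IH; reflexivity. Qed.
Lemma iterD3_d3 l f : iterD3 l (d3 f) = iterD3 (l ++ 2%nat :: nil) f.
Proof. induction l as [|[|[|a]] l IH]; simpl; try rewrite IH; reflexivity. Qed.

Lemma smooth3_d1 f : smooth3 f -> smooth3 (d1 f).
Proof. intros H l; rewrite iterD3_d1; apply H. Qed.
Lemma smooth3_d2 f : smooth3 f -> smooth3 (d2 f).
Proof. intros H l; rewrite iterD3_d2; apply H. Qed.
Lemma smooth3_d3 f : smooth3 f -> smooth3 (d3 f).
Proof. intros H l; rewrite iterD3_d3; apply H. Qed.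

Lemma smooth3_ex_derive_t f t x u : smooth3 f -> ex_derive (fun s => f s x u) t.
Proof. intros H; exact (proj1 (H nil t x u)). Qed.
Lemma smooth3_ex_derive_x f t x u : smooth3 f -> ex_derive (fun s => f t s u) x.
Proof. intros H; exact (proj1 (proj2 (H nil t x u))). Qed.
Lemma smooth3_ex_derive_u f t x u : smooth3 f -> ex_derive (fun s => f t x s) u.
Proof. intros H; exact (proj1 (proj2 (proj2 (H nil t x u)))). Qed.

Lemma iterD2_e1 l f : iterD2 l (e1 f) = iterD2 (l ++ true :: nil) f.
Proof. induction l as [|[|] l IH]; simpl; try rewrite IH; reflexivity. Qed.
Lemma iterD2_e2 l f : iterD2 l (e2 f) = iterD2 (l ++ false :: nil) f.
Proof. induction l as [|[|] l IH]; simpl; try rewrite IH; reflexivity. Qed.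

Lemma smooth2_e1 f : smooth2 f -> smooth2 (e1 f).
Proof. intros H l; rewrite iterD2_e1; apply H. Qed.
Lemma smooth2_e2 f : smooth2 f -> smooth2 (e2 f).
Proof. intros H l; rewrite iterD2_e2; apply H. Qed.

Lemma smooth2_ex_derive_t f t x : smooth2 f -> ex_derive (fun s => f s x) t.
Proof. intros H; exact (proj1 (H nil t x)). Qed.
Lemma smooth2_ex_derive_x f t x : smooth2 f -> ex_derive (fun s => f t s) x.
Proof. intros H; exact (proj1 (proj2 (H nil t x))). Qed.

Lemma d2_eq0 f : (forall t x u, f t x u = 0) -> forall t x u, d2 f t x u = 0.
Proof. intros H t x u; exact (Derive_of_const _ 0 x (fun s => H t s u)). Qed.
Lemma d3_eq0 f : (forall t x u, f t x u = 0) -> forall t x u, d3 f t x u = 0.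
Proof. intros H t x u; exact (Derive_of_const _ 0 u (fun s => H t x s)). Qed.

(* The data [(T, P, c, a)] of the vector field
   [T(t) d_t + (P(t) + (T'(t) + c) x) d_x + (c u + a) d_u], with the derivatives
   [T'], [T''] and [P'] carried along as separate fields. *)
Record cdata := CData {
  cT : R -> R; cT' : R -> R; cT'' : R -> R;
  cP : R -> R; cP' : R -> R;
  cc : R; ca : R }.

Definition cxi (D : cdata) (t x : R) : R := cP D t + (cT' D t + cc D) * x.

Definition represents (Q : vfield) (D : cdata) : Prop :=
  forall t x u, vtau Q t x u = cT D t /\ vxi Q t x u = cxi D t x /\ veta Q t x u = cc D * u + ca D.

Record classifying (A1 A2 : R -> R -> R) (D : cdata) : Prop := {
  cl_T' : forall t, is_derive (cT D) t (cT' D t);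
  cl_T'' : forall t, is_derive (cT' D) t (cT'' D t);
  cl_P' : forall t, is_derive (cP D) t (cP' D t);
  cl_A2 : forall t x, A2 t x * (cT' D t + 2 * cc D) = cT D t * e1 A2 t x + cxi D t x * e2 A2 t x;
  cl_A1 : forall t x, ca D = cP' D t + cT'' D t * x - cc D * A1 t x
                             + cT D t * e1 A1 t x + cxi D t x * e2 A1 t x }.

Section LieSymmetry.

Variables (A1 A2 : R -> R -> R) (Q : vfield).
Hypothesis A2_neq0 : forall t x, A2 t x <> 0.
Hypothesis invQ : invariance_condition A1 A2 Q.
Hypothesis A1_smooth : smooth2 A1.
Hypothesis A1_xx_neq0 : forall t x, e2 (e2 A1) t x <> 0.
Hypotheses (tau_smooth : smooth3 (vtau Q)) (xi_smooth : smooth3 (vxi Q)) (eta_smooth : smooth3 (veta Q)).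

Local Notation tau := (vtau Q).
Local Notation xi := (vxi Q).
Local Notation eta := (veta Q).

(* The invariance condition is a polynomial in the jet variables [ux], [utx], [uxx];
   each lemma below reads off one of its coefficients by evaluating at a few jets. *)
Lemma utx_coef_eq0 t x u ux : A2 t x * (d2 tau t x u + d3 tau t x u * ux) = 0.
Proof.
  pose proof (invQ t x u ux 1 0) as H1; pose proof (invQ t x u ux 0 0) as H0.
  cbv beta zeta in H1, H0; lra.
Qed.

Lemma tau_x_eq0 t x u : d2 tau t x u = 0.
Proof.
  apply (Rmult_eq0_reg_l (A2 t x)); [apply A2_neq0|].
  pose proof (utx_coef_eq0 t x u 0); lra.
Qed.

Lemma tau_u_eq0 t x u : d3 tau t x u = 0.
Proof.
  apply (Rmult_eq0_reg_l (A2 t x)); [apply A2_neq0|].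
  pose proof (utx_coef_eq0 t x u 1); rewrite tau_x_eq0 in *; lra.
Qed.

Lemma uxx_coef_eq0 t x u ux :
  A2 t x * (2 * d2 xi t x u - d1 tau t x u) - tau t x u * e1 A2 t x - xi t x u * e2 A2 t x
  + 2 * A2 t x * d3 xi t x u * ux = 0.
Proof.
  pose proof (invQ t x u ux 0 1) as H1; pose proof (invQ t x u ux 0 0) as H0.
  cbv beta zeta in H1, H0.
  rewrite (d2_eq0 _ tau_x_eq0), (d2_eq0 _ tau_u_eq0), (d3_eq0 _ tau_u_eq0),
    tau_x_eq0, tau_u_eq0 in H1, H0.
  lra.
Qed.

Lemma xi_u_eq0 t x u : d3 xi t x u = 0.
Proof.
  apply (Rmult_eq0_reg_l (2 * A2 t x)); [pose proof (A2_neq0 t x); lra|].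
  pose proof (uxx_coef_eq0 t x u 0); pose proof (uxx_coef_eq0 t x u 1); lra.
Qed.

Lemma xi_A2_eq t x u :
  A2 t x * (2 * d2 xi t x u - d1 tau t x u) = tau t x u * e1 A2 t x + xi t x u * e2 A2 t x.
Proof. pose proof (uxx_coef_eq0 t x u 0); lra. Qed.

Lemma ux_coefs_eq0 t x u :
  d1 eta t x u + u * d2 eta t x u - A2 t x * d2 (d2 eta) t x u - A1 t x * d2 eta t x u = 0 /\
  (A1 t x - u) * (d3 eta t x u - d1 tau t x u) - d1 xi t x u + eta t x u
    + u * (d3 eta t x u - d2 xi t x u) - 2 * A2 t x * d2 (d3 eta) t x u
    + A2 t x * d2 (d2 xi) t x u - tau t x u * e1 A1 t x - xi t x u * e2 A1 t x
    - A1 t x * (d3 eta t x u - d2 xi t x u) = 0 /\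
  - A2 t x * d3 (d3 eta) t x u = 0.
Proof.
  apply quadratic_coefs_eq0; intro ux.
  pose proof (invQ t x u ux 0 0) as H; cbv beta zeta in H.
  rewrite (d2_eq0 _ tau_x_eq0), (d2_eq0 _ tau_u_eq0), (d3_eq0 _ tau_u_eq0),
    tau_x_eq0, tau_u_eq0, (d2_eq0 _ xi_u_eq0), (d3_eq0 _ xi_u_eq0), xi_u_eq0 in H.
  lra.
Qed.

Lemma eta_uu_eq0 t x u : d3 (d3 eta) t x u = 0.
Proof.
  apply (Rmult_eq0_reg_l (- A2 t x)); [apply Ropp_neq_0_compat, A2_neq0 |].
  exact (proj2 (proj2 (ux_coefs_eq0 t x u))).
Qed.

Lemma tau_eq t x u : tau t x u = tau t 0 0.
Proof.
  rewrite (const_of_Derive_eq0 (fun s => tau t x s) (fun y => smooth3_ex_derive_u _ t x y tau_smooth)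
             (fun y => tau_u_eq0 t x y) u).
  exact (const_of_Derive_eq0 (fun s => tau t s 0) (fun y => smooth3_ex_derive_x _ t y 0 tau_smooth)
           (fun y => tau_x_eq0 t y 0) x).
Qed.

Lemma tau_t_eq t x u : d1 tau t x u = d1 tau t 0 0.
Proof. apply Derive_ext; intro; apply tau_eq. Qed.

Lemma xi_indep_u t x u : xi t x u = xi t x 0.
Proof.
  exact (const_of_Derive_eq0 (fun s => xi t x s) (fun y => smooth3_ex_derive_u _ t x y xi_smooth)
           (fun y => xi_u_eq0 t x y) u).
Qed.

Lemma eta_u_indep_u t x u : d3 eta t x u = d3 eta t x 0.
Proof.
  exact (const_of_Derive_eq0 (fun s => d3 eta t x s)
           (fun y => smooth3_ex_derive_u _ t x y (smooth3_d3 _ eta_smooth))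
           (fun y => eta_uu_eq0 t x y) u).
Qed.

Lemma eta_affine_u t x u : eta t x u = eta t x 0 + d3 eta t x 0 * u.
Proof.
  exact (affine_of_Derive_const (fun s => eta t x s) _ (fun y => smooth3_ex_derive_u _ t x y eta_smooth)
           (fun y => eta_u_indep_u t x y) u).
Qed.

Lemma d1_eta_affine_u t x u : d1 eta t x u = d1 eta t x 0 + d1 (d3 eta) t x 0 * u.
Proof.
  unfold d1; rewrite (Derive_ext _ _ _ (fun s => eta_affine_u s x u)).
  apply Derive_affine; [apply smooth3_ex_derive_t, eta_smooth |].
  apply smooth3_ex_derive_t, smooth3_d3, eta_smooth.
Qed.

Lemma d2_eta_affine_u t x u : d2 eta t x u = d2 eta t x 0 + d2 (d3 eta) t x 0 * u.
Proof.
  unfold d2; rewrite (Derive_ext _ _ _ (fun s => eta_affine_u t s u)).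
  apply Derive_affine; [apply smooth3_ex_derive_x, eta_smooth |].
  apply smooth3_ex_derive_x, smooth3_d3, eta_smooth.
Qed.

Lemma d22_eta_affine_u t x u : d2 (d2 eta) t x u = d2 (d2 eta) t x 0 + d2 (d2 (d3 eta)) t x 0 * u.
Proof.
  unfold d2 at 1; rewrite (Derive_ext _ _ _ (fun s => d2_eta_affine_u t s u)).
  apply Derive_affine; [apply smooth3_ex_derive_x, smooth3_d2, eta_smooth |].
  apply smooth3_ex_derive_x, smooth3_d2, smooth3_d3, eta_smooth.
Qed.

Lemma eta_u_eq t x : d3 eta t x 0 = d2 xi t x 0 - d1 tau t 0 0.
Proof.
  assert (Hxi : forall t x u, d1 xi t x u = d1 xi t x 0 /\ d2 xi t x u = d2 xi t x 0)
    by (intros; split; apply Derive_ext; intro; apply xi_indep_u).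
  pose proof (proj1 (proj2 (ux_coefs_eq0 t x 0))) as E0.
  pose proof (proj1 (proj2 (ux_coefs_eq0 t x 1))) as E1.
  assert (Heta_x : d2 (d3 eta) t x 1 = d2 (d3 eta) t x 0)
    by (apply Derive_ext; intro; apply eta_u_indep_u).
  assert (Hxi_xx : d2 (d2 xi) t x 1 = d2 (d2 xi) t x 0)
    by (apply Derive_ext; intro; apply Hxi).
  rewrite Heta_x, Hxi_xx, eta_u_indep_u, eta_affine_u, tau_t_eq, (proj1 (Hxi t x 1)), (proj2 (Hxi t x 1)),
    tau_eq, xi_indep_u in E1.
  rewrite tau_t_eq, tau_eq in E0.
  lra.
Qed.

Lemma heat_coefs_eq0 t x :
  d1 eta t x 0 - A2 t x * d2 (d2 eta) t x 0 - A1 t x * d2 eta t x 0 = 0 /\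
  d1 (d3 eta) t x 0 + d2 eta t x 0 - A2 t x * d2 (d2 (d3 eta)) t x 0 - A1 t x * d2 (d3 eta) t x 0 = 0 /\
  d2 (d3 eta) t x 0 = 0.
Proof.
  apply quadratic_coefs_eq0; intro u; pose proof (proj1 (ux_coefs_eq0 t x u)) as E.
  rewrite d1_eta_affine_u, d2_eta_affine_u, d22_eta_affine_u in E; lra.
Qed.

Lemma eta_u_indep_x t x : d3 eta t x 0 = d3 eta t 0 0.
Proof.
  exact (const_of_Derive_eq0 (fun s => d3 eta t s 0)
           (fun y => smooth3_ex_derive_x _ t y 0 (smooth3_d3 _ eta_smooth))
           (fun y => proj2 (proj2 (heat_coefs_eq0 t y))) x).
Qed.

Lemma xi_x_eq t x : d2 xi t x 0 = d1 tau t 0 0 + d3 eta t 0 0.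
Proof. pose proof (eta_u_eq t x); rewrite eta_u_indep_x in *; lra. Qed.

Lemma xi_affine_x t x : xi t x 0 = xi t 0 0 + (d1 tau t 0 0 + d3 eta t 0 0) * x.
Proof.
  exact (affine_of_Derive_const (fun s => xi t s 0) _ (fun y => smooth3_ex_derive_x _ t y 0 xi_smooth)
           (fun y => xi_x_eq t y) x).
Qed.

Lemma eta_x_eq t x : d2 eta t x 0 = - d1 (d3 eta) t 0 0.
Proof.
  destruct (heat_coefs_eq0 t x) as [_ [H1 H0]].
  assert (Hxx : d2 (d2 (d3 eta)) t x 0 = 0)
    by exact (Derive_of_const _ 0 x (fun s => proj2 (proj2 (heat_coefs_eq0 t s)))).
  assert (Ht : d1 (d3 eta) t x 0 = d1 (d3 eta) t 0 0)
    by (apply Derive_ext; intro; apply eta_u_indep_x).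
  rewrite H0, Hxx, Ht in H1; lra.
Qed.

Lemma eta_affine_x t x : eta t x 0 = eta t 0 0 + d1 (d3 eta) t 0 0 * (- x).
Proof.
  rewrite (affine_of_Derive_const (fun s => eta t s 0) _ (fun y => smooth3_ex_derive_x _ t y 0 eta_smooth)
             (fun y => eta_x_eq t y) x).
  ring.
Qed.

(* Here the hypothesis [A1_xx <> 0] enters: [A1(t, .)] is not affine. *)
Lemma eta_t_coefs_eq0 t : d1 (d3 eta) t 0 0 = 0 /\ d1 eta t 0 0 = 0.
Proof.
  assert (E : forall x, d1 eta t 0 0 + - d1 (d1 (d3 eta)) t 0 0 * x + d1 (d3 eta) t 0 0 * A1 t x = 0).
  { intro x; pose proof (proj1 (heat_coefs_eq0 t x)) as H.
    assert (Ht : d1 eta t x 0 = d1 eta t 0 0 + d1 (d1 (d3 eta)) t 0 0 * (- x)).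
    { unfold d1 at 1; rewrite (Derive_ext _ _ _ (fun s => eta_affine_x s x)).
      apply Derive_affine; [apply smooth3_ex_derive_t, eta_smooth |].
      apply smooth3_ex_derive_t, smooth3_d1, smooth3_d3, eta_smooth. }
    assert (Hxx : d2 (d2 eta) t x 0 = 0)
      by exact (Derive_of_const _ _ x (fun s => eta_x_eq t s)).
    rewrite Ht, Hxx, eta_x_eq in H; lra. }
  assert (Hc : d1 (d3 eta) t 0 0 = 0).
  { apply (affine_relation_coef_eq0 (fun s => A1 t s) _ _ _ 0 (fun y => smooth2_ex_derive_x _ t y A1_smooth)
             (fun y => smooth2_ex_derive_x _ t y (smooth2_e2 _ A1_smooth)) (A1_xx_neq0 t 0) E). }
  split; [exact Hc |]; pose proof (E 0); rewrite Hc in *; lra.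
Qed.

Lemma eta_u_const t x u : d3 eta t x u = d3 eta 0 0 0.
Proof.
  rewrite eta_u_indep_u, eta_u_indep_x.
  exact (const_of_Derive_eq0 (fun s => d3 eta s 0 0)
           (fun y => smooth3_ex_derive_t _ y 0 0 (smooth3_d3 _ eta_smooth))
           (fun y => proj1 (eta_t_coefs_eq0 y)) t).
Qed.

Lemma eta_eq t x u : eta t x u = d3 eta 0 0 0 * u + eta 0 0 0.
Proof.
  rewrite eta_affine_u, eta_affine_x, (proj1 (eta_t_coefs_eq0 t)), eta_u_const.
  rewrite (const_of_Derive_eq0 (fun s => eta s 0 0) (fun y => smooth3_ex_derive_t _ y 0 0 eta_smooth)
             (fun y => proj2 (eta_t_coefs_eq0 y)) t).
  ring.
Qed.

Definition cdata_of (Q : vfield) : cdata :=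
  CData (fun t => vtau Q t 0 0) (fun t => d1 (vtau Q) t 0 0) (fun t => d1 (d1 (vtau Q)) t 0 0)
        (fun t => vxi Q t 0 0) (fun t => d1 (vxi Q) t 0 0) (d3 (veta Q) 0 0 0) (veta Q 0 0 0).

Lemma xi_eq t x u : xi t x u = cxi (cdata_of Q) t x.
Proof.
  unfold cxi; simpl; rewrite xi_indep_u, xi_affine_x, <- (eta_u_const t 0 0); reflexivity.
Qed.

Lemma represents_cdata_of : represents Q (cdata_of Q).
Proof. intros t x u; split; [apply tau_eq | split; [apply xi_eq | apply eta_eq]]. Qed.

Lemma classifying_cdata_of : classifying A1 A2 (cdata_of Q).
Proof.
  constructor; simpl.
  - intro t; exact (Derive_correct _ _ (smooth3_ex_derive_t _ t 0 0 tau_smooth)).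
  - intro t; exact (Derive_correct _ _ (smooth3_ex_derive_t _ t 0 0 (smooth3_d1 _ tau_smooth))).
  - intro t; exact (Derive_correct _ _ (smooth3_ex_derive_t _ t 0 0 xi_smooth)).
  - intros t x; pose proof (xi_A2_eq t x 0) as H.
    rewrite xi_x_eq, (tau_t_eq t x 0), (tau_eq t x 0), (xi_eq t x 0), (eta_u_const t 0 0) in H.
    unfold cxi in *; simpl in *; lra.
  - intros t x; pose proof (proj1 (proj2 (ux_coefs_eq0 t x 0))) as H.
    assert (Hxi_t : d1 xi t x 0 = d1 xi t 0 0 + d1 (d1 tau) t 0 0 * x).
    { unfold d1 at 1.
      rewrite (Derive_ext _ (fun s => xi s 0 0 + (d1 tau s 0 0 + d3 eta 0 0 0) * x) _
                 (fun s => xi_eq s x 0)).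
      apply Derive_affine_shift; [apply smooth3_ex_derive_t, xi_smooth |].
      apply smooth3_ex_derive_t, smooth3_d1, tau_smooth. }
    assert (Hxi_xx : d2 (d2 xi) t x 0 = 0) by exact (Derive_of_const _ _ x (fun s => xi_x_eq t s)).
    rewrite Hxi_t, Hxi_xx, (proj2 (proj2 (heat_coefs_eq0 t x))), xi_x_eq, (eta_u_const t 0 0), (eta_u_const t x 0),
      (tau_t_eq t x 0), (tau_eq t x 0), (xi_eq t x 0), (eta_eq t x 0) in H.
    unfold cxi in *; simpl in *; lra.
Qed.

End LieSymmetry.

Definition cd_zero (D : cdata) : Prop :=
  (forall t, cT D t = 0 /\ cT' D t = 0 /\ cP D t = 0) /\ cc D = 0 /\ ca D = 0.

Definition cd_scale (k : R) (D : cdata) : cdata :=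
  CData (fun t => k * cT D t) (fun t => k * cT' D t) (fun t => k * cT'' D t)
        (fun t => k * cP D t) (fun t => k * cP' D t) (k * cc D) (k * ca D).

Definition cd_add (D E : cdata) : cdata :=
  CData (fun t => cT D t + cT E t) (fun t => cT' D t + cT' E t) (fun t => cT'' D t + cT'' E t)
        (fun t => cP D t + cP E t) (fun t => cP' D t + cP' E t) (cc D + cc E) (ca D + ca E).

Definition cd_sum (k : nat -> R) (D : nat -> cdata) (n : nat) : cdata :=
  CData (fun t => sum_f_R0 (fun i => k i * cT (D i) t) n)
        (fun t => sum_f_R0 (fun i => k i * cT' (D i) t) n)
        (fun t => sum_f_R0 (fun i => k i * cT'' (D i) t) n)
        (fun t => sum_f_R0 (fun i => k i * cP (D i) t) n)
        (fun t => sum_f_R0 (fun i => k i * cP' (D i) t) n)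
        (sum_f_R0 (fun i => k i * cc (D i)) n) (sum_f_R0 (fun i => k i * ca (D i)) n).

Definition vf_scale (k : R) (Q : vfield) : vfield :=
  VF (fun t x u => k * vtau Q t x u) (fun t x u => k * vxi Q t x u) (fun t x u => k * veta Q t x u).

Definition vf_add (Q Q' : vfield) : vfield :=
  VF (fun t x u => vtau Q t x u + vtau Q' t x u) (fun t x u => vxi Q t x u + vxi Q' t x u)
     (fun t x u => veta Q t x u + veta Q' t x u).

Definition vf_sum (k : nat -> R) (Q : nat -> vfield) (n : nat) : vfield :=
  VF (fun t x u => sum_f_R0 (fun i => k i * vtau (Q i) t x u) n)
     (fun t x u => sum_f_R0 (fun i => k i * vxi (Q i) t x u) n)
     (fun t x u => sum_f_R0 (fun i => k i * veta (Q i) t x u) n).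

Lemma classifying_scale A1 A2 k D : classifying A1 A2 D -> classifying A1 A2 (cd_scale k D).
Proof.
  intros [dT dT' dP EA2 EA1]; constructor; unfold cxi; simpl.
  - intro t; apply is_derive_scal, dT.
  - intro t; apply is_derive_scal, dT'.
  - intro t; apply is_derive_scal, dP.
  - intros t x; pose proof (f_equal (Rmult k) (EA2 t x)); unfold cxi in *; lra.
  - intros t x; pose proof (f_equal (Rmult k) (EA1 t x)); unfold cxi in *; lra.
Qed.

Lemma classifying_add A1 A2 D E :
  classifying A1 A2 D -> classifying A1 A2 E -> classifying A1 A2 (cd_add D E).
Proof.
  intros [dT dT' dP EA2 EA1] [dT_ dT'_ dP_ EA2_ EA1_]; constructor; unfold cxi; simpl.
  - intro t; exact (is_derive_plus _ _ _ _ _ (dT t) (dT_ t)).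
  - intro t; exact (is_derive_plus _ _ _ _ _ (dT' t) (dT'_ t)).
  - intro t; exact (is_derive_plus _ _ _ _ _ (dP t) (dP_ t)).
  - intros t x; pose proof (EA2 t x); pose proof (EA2_ t x); unfold cxi in *; lra.
  - intros t x; pose proof (EA1 t x); pose proof (EA1_ t x); unfold cxi in *; lra.
Qed.

Lemma classifying_sum A1 A2 k D n :
  (forall i, (i <= n)%nat -> classifying A1 A2 (D i)) -> classifying A1 A2 (cd_sum k D n).
Proof.
  induction n as [|n IH]; intros HD.
  - exact (classifying_scale _ _ (k 0%nat) _ (HD 0%nat (le_n 0))).
  - exact (classifying_add _ _ _ _ (IH (fun i Hi => HD i (le_S _ _ Hi)))
             (classifying_scale _ _ (k (S n)) _ (HD (S n) (le_n _)))).
Qed.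

Lemma represents_scale k Q D : represents Q D -> represents (vf_scale k Q) (cd_scale k D).
Proof.
  intros H t x u; destruct (H t x u) as [H1 [H2 H3]]; unfold cxi in *; simpl.
  rewrite H1, H2, H3; repeat split; ring.
Qed.

Lemma represents_add Q Q' D E :
  represents Q D -> represents Q' E -> represents (vf_add Q Q') (cd_add D E).
Proof.
  intros H H' t x u; destruct (H t x u) as [H1 [H2 H3]]; destruct (H' t x u) as [H1' [H2' H3']].
  unfold cxi in *; simpl; rewrite H1, H2, H3, H1', H2', H3'; repeat split; ring.
Qed.

Lemma represents_sum k Q D n :
  (forall i, (i <= n)%nat -> represents (Q i) (D i)) -> represents (vf_sum k Q n) (cd_sum k D n).
Proof.
  induction n as [|n IH]; intros HD.
  - exact (represents_scale (k 0%nat) _ _ (HD 0%nat (le_n 0))).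
  - exact (represents_add _ _ _ _ (IH (fun i Hi => HD i (le_S _ _ Hi)))
             (represents_scale (k (S n)) _ _ (HD (S n) (le_n _)))).
Qed.

Lemma represents_zero Q D : represents Q D -> cd_zero D ->
  forall t x u, vtau Q t x u = 0 /\ vxi Q t x u = 0 /\ veta Q t x u = 0.
Proof.
  intros H [HZ [Hc Ha]] t x u; destruct (H t x u) as [H1 [H2 H3]]; destruct (HZ t) as [Z1 [Z2 Z3]].
  unfold cxi in H2; rewrite H1, H2, H3, Z1, Z2, Z3, Hc, Ha; repeat split; ring.
Qed.

Section ClassifyingData.

Variables (A1 A2 : R -> R -> R).
Hypotheses (A1_smooth : smooth2 A1) (A2_smooth : smooth2 A2).
Hypothesis A2_neq0 : forall t x, A2 t x <> 0.
Hypothesis A1_xx_neq0 : forall t x, e2 (e2 A1) t x <> 0.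
Variable D : cdata.
Hypothesis HD : classifying A1 A2 D.

Lemma classifying_A1_x t x :
  cT'' D t + cT' D t * e2 A1 t x + cT D t * e2 (e1 A1) t x + cxi D t x * e2 (e2 A1) t x = 0.
Proof.
  apply (is_derive_of_const (fun y => cP' D t + cT'' D t * y - cc D * A1 t y + cT D t * e1 A1 t y
                                      + cxi D t y * e2 A1 t y) (ca D) x).
  - intro y; symmetry; apply (cl_A1 _ _ _ HD).
  - unfold cxi; auto_derive.
    + repeat split; apply smooth2_ex_derive_x; auto using smooth2_e1, smooth2_e2.
    + unfold e2; ring.
Qed.

Hypothesis c_eq0 : cc D = 0.

(* At a zero of [cxi D t0] the classifying equation for [A2] reads [A2 T' = 0]. *)
Lemma T'_eq0_of_T_eq0 t0 : cT D t0 = 0 -> cT' D t0 = 0.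
Proof.
  intros HT; destruct (Req_dec (cT' D t0) 0) as [|HT']; [assumption | exfalso].
  set (x0 := - cP D t0 / cT' D t0).
  assert (Hxi : cxi D t0 x0 = 0) by (unfold cxi, x0; rewrite c_eq0; field; exact HT').
  pose proof (cl_A2 _ _ _ HD t0 x0) as H; rewrite HT, Hxi, c_eq0 in H.
  apply HT', (Rmult_eq0_reg_l (A2 t0 x0)); [apply A2_neq0 | lra].
Qed.

Lemma vanish_at_nondegenerate_time t0 x0 :
  e2 A2 t0 x0 <> 0 -> cT D t0 = 0 -> cT' D t0 = 0 /\ cP D t0 = 0 /\ ca D = 0.
Proof.
  intros HA2x HT; pose proof (T'_eq0_of_T_eq0 t0 HT) as HT'.
  assert (HP : cP D t0 = 0).
  { pose proof (cl_A2 _ _ _ HD t0 x0) as H; unfold cxi in H; rewrite HT, HT', c_eq0 in H.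
    rewrite Rmult_comm in H; apply (Rmult_eq0_reg_l _ _ HA2x); lra. }
  assert (HT'' : cT'' D t0 = 0).
  { pose proof (classifying_A1_x t0 0) as H; unfold cxi in H; rewrite HT, HT', HP in H; lra. }
  assert (Ha : ca D = cP' D t0).
  { pose proof (cl_A1 _ _ _ HD t0 0) as H; unfold cxi in H; rewrite HT, HT', HP, c_eq0 in H; lra. }
  (* differentiate the [A2] equation in [t] at [t0], where [T], [T'], [T''] and [P] vanish *)
  assert (Hd : is_derive (fun s => A2 s x0 * (cT' D s + 2 * cc D) - cT D s * e1 A2 s x0
                                   - cxi D s x0 * e2 A2 s x0) t0 (- cP' D t0 * e2 A2 t0 x0)).
  { unfold cxi; auto_derive.
    - pose proof (ex_intro _ _ (cl_T' _ _ _ HD t0)); pose proof (ex_intro _ _ (cl_T'' _ _ _ HD t0));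
      pose proof (ex_intro _ _ (cl_P' _ _ _ HD t0)); pose proof (smooth2_ex_derive_t _ t0 x0 A2_smooth);
      pose proof (smooth2_ex_derive_t _ t0 x0 (smooth2_e1 _ A2_smooth));
      pose proof (smooth2_ex_derive_t _ t0 x0 (smooth2_e2 _ A2_smooth)).
      repeat match goal with |- _ /\ _ => split end; first [exact I | assumption].
    - rewrite (Derive_of_is_derive _ _ _ (cl_T' _ _ _ HD t0)), (Derive_of_is_derive _ _ _ (cl_T'' _ _ _ HD t0)),
        (Derive_of_is_derive _ _ _ (cl_P' _ _ _ HD t0)), HT, HT', HT'', HP, c_eq0; ring. }
  apply is_derive_of_const with (k := 0) in Hd; [| intro s; pose proof (cl_A2 _ _ _ HD s x0); lra].
  repeat split; try assumption.
  rewrite Ha; apply (Rmult_eq0_reg_l (- e2 A2 t0 x0)); [apply Ropp_neq_0_compat, HA2x | lra].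
Qed.

(* [(T, T', P)] solves a linear ODE whose coefficients are derivatives of [A1] along [x = 0]. *)
Lemma zero_of_initial_zero t0 :
  ca D = 0 -> cT D t0 = 0 -> cT' D t0 = 0 -> cP D t0 = 0 -> cd_zero D.
Proof.
  intros Ha HT HT' HP.
  set (M := fun t => 1 + Rabs (e2 A1 t 0) + Rabs (e2 (e1 A1) t 0) + Rabs (e2 (e2 A1) t 0)
                     + Rabs (e1 A1 t 0)).
  assert (HM : forall t, continuity_pt M t).
  { intro t; unfold M.
    assert (Hc : forall f, smooth2 f -> continuity_pt (fun s => Rabs (f s 0)) t).
    { intros f Hf; apply continuity_pt_filterlim, (continuous_Rabs_comp (fun s => f s 0)).
      apply (ex_derive_continuous (fun s => f s 0)), smooth2_ex_derive_t, Hf. }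
    repeat apply continuity_pt_plus; auto using smooth2_e1, smooth2_e2.
    apply continuity_pt_const; intros a b; reflexivity. }
  assert (Hbound : forall t, Rabs (cT' D t) + Rabs (cT'' D t) + Rabs (cP' D t)
                             <= M t * (Rabs (cT D t) + Rabs (cT' D t) + Rabs (cP D t))).
  { intro t.
    assert (HT'' : cT'' D t = - (cT' D t * e2 A1 t 0 + cT D t * e2 (e1 A1) t 0 + cP D t * e2 (e2 A1) t 0)).
    { pose proof (classifying_A1_x t 0) as H; unfold cxi in H; lra. }
    assert (HP' : cP' D t = - (cT D t * e1 A1 t 0 + cP D t * e2 A1 t 0)).
    { pose proof (cl_A1 _ _ _ HD t 0) as H; unfold cxi in H; rewrite Ha, c_eq0 in H; lra. }
    rewrite HT'', HP', !Rabs_Ropp; unfold M.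
    pose proof (Rabs_triang (cT' D t * e2 A1 t 0 + cT D t * e2 (e1 A1) t 0) (cP D t * e2 (e2 A1) t 0)).
    pose proof (Rabs_triang (cT' D t * e2 A1 t 0) (cT D t * e2 (e1 A1) t 0)).
    pose proof (Rabs_triang (cT D t * e1 A1 t 0) (cP D t * e2 A1 t 0)).
    rewrite !Rabs_mult in *.
    set (y1 := Rabs (cT D t)) in *; set (y2 := Rabs (cT' D t)) in *; set (y3 := Rabs (cP D t)) in *.
    set (a := Rabs (e2 A1 t 0)) in *; set (b := Rabs (e2 (e1 A1) t 0)) in *.
    set (g := Rabs (e2 (e2 A1) t 0)) in *; set (d := Rabs (e1 A1 t 0)) in *.
    assert (0 <= y1) by apply Rabs_pos; assert (0 <= y2) by apply Rabs_pos; assert (0 <= y3) by apply Rabs_pos.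
    assert (0 <= a) by apply Rabs_pos; assert (0 <= b) by apply Rabs_pos.
    assert (0 <= g) by apply Rabs_pos; assert (0 <= d) by apply Rabs_pos.
    nra. }
  split; [exact (ode3_zero _ _ _ _ _ _ M t0 (cl_T' _ _ _ HD) (cl_T'' _ _ _ HD) (cl_P' _ _ _ HD)
                            HM Hbound HT HT' HP) | split; assumption].
Qed.

(* If [A2] does not depend on [x], then [A2 T' = T A2_t] makes [T / A2] constant in [t]. *)
Lemma zero_of_A2_x_free t0 : (forall t x, e2 A2 t x = 0) -> cT D t0 = 0 -> cd_zero D.
Proof.
  intros HA2x HT0.
  assert (Hq : forall s, is_derive (fun s => cT D s / A2 s 0) s 0).
  { intro s; pose proof (cl_A2 _ _ _ HD s 0) as H; rewrite HA2x, c_eq0 in H.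
    auto_derive.
    - repeat split; [eexists; exact (cl_T' _ _ _ HD s) | apply smooth2_ex_derive_t, A2_smooth | apply A2_neq0].
    - rewrite (Derive_of_is_derive _ _ _ (cl_T' _ _ _ HD s)).
      change (Derive (fun x => A2 x 0) s) with (e1 A2 s 0).
      transitivity ((A2 s 0 * cT' D s - cT D s * e1 A2 s 0) / (A2 s 0 * A2 s 0)).
      + field; apply A2_neq0.
      + replace (A2 s 0 * cT' D s - cT D s * e1 A2 s 0) with 0 by lra; unfold Rdiv; ring. }
  assert (HT : forall t, cT D t = 0).
  { intro t.
    assert (Hex : forall s, ex_derive (fun s => cT D s / A2 s 0) s) by (intro s; eexists; apply Hq).
    assert (Hd : forall s, Derive (fun s => cT D s / A2 s 0) s = 0) by (intro s; apply is_derive_unique, Hq).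
    pose proof (const_of_Derive_eq0 _ Hex Hd t) as Ht; pose proof (const_of_Derive_eq0 _ Hex Hd t0) as Ht0.
    cbv beta in Ht, Ht0; rewrite HT0 in Ht0.
    replace (cT D t) with (cT D t / A2 t 0 * A2 t 0) by (field; apply A2_neq0).
    rewrite Ht, <- Ht0; unfold Rdiv; ring. }
  assert (HT' : forall t, cT' D t = 0) by (intro t; exact (is_derive_of_const _ 0 t _ HT (cl_T' _ _ _ HD t))).
  assert (HT'' : forall t, cT'' D t = 0) by (intro t; exact (is_derive_of_const _ 0 t _ HT' (cl_T'' _ _ _ HD t))).
  assert (HP : forall t, cP D t = 0).
  { intro t; pose proof (classifying_A1_x t 0) as H; unfold cxi in H; rewrite HT, HT', HT'' in H.
    apply (Rmult_eq0_reg_l (e2 (e2 A1) t 0)); [apply A1_xx_neq0 | lra]. }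
  assert (Ha : ca D = 0).
  { pose proof (cl_A1 _ _ _ HD t0 0) as H; unfold cxi in H.
    rewrite HT, HT'', HP, c_eq0, (is_derive_of_const _ 0 t0 _ HP (cl_P' _ _ _ HD t0)) in H; lra. }
  split; [intro t; auto | split; assumption].
Qed.

End ClassifyingData.

Lemma lie_symmetry_classified A1 A2 Q : in_class_L1hat A1 A2 -> lie_symmetry A1 A2 Q ->
  classifying A1 A2 (cdata_of Q) /\ represents Q (cdata_of Q).
Proof.
  intros [sA1 [_ [HA2 HA1]]] [stau [sxi [seta invQ]]].
  split; [exact (classifying_cdata_of A1 A2 Q HA2 invQ sA1 HA1 stau sxi seta)
         | exact (represents_cdata_of A1 A2 Q HA2 invQ sA1 HA1 stau sxi seta)].
Qed.

Lemma exists_injective_time A1 A2 : in_class_L1hat A1 A2 ->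
  exists t0, forall D, classifying A1 A2 D -> cT D t0 = 0 -> cc D = 0 -> cd_zero D.
Proof.
  intros [sA1 [sA2 [HA2 HA1]]].
  destruct (classic (exists t0 x0, e2 A2 t0 x0 <> 0)) as [[t0 [x0 Hx0]] | Hfree].
  - exists t0; intros D HD HT Hc.
    destruct (vanish_at_nondegenerate_time A1 A2 sA1 sA2 HA2 D HD Hc t0 x0 Hx0 HT) as [HT' [HP Ha]].
    exact (zero_of_initial_zero A1 A2 sA1 D HD Hc t0 Ha HT HT' HP).
  - exists 0; intros D HD HT Hc.
    apply (zero_of_A2_x_free A1 A2 sA1 sA2 HA2 HA1 D HD Hc 0); [| exact HT].
    intros t x; apply NNPP; intro Hx; apply Hfree; exists t, x; exact Hx.
Qed.

Lemma homogeneous_2x3_nontrivial (a b : nat -> R) :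
  exists k : nat -> R, (exists i, (i <= 2)%nat /\ k i <> 0) /\
    sum_f_R0 (fun i => k i * a i) 2 = 0 /\ sum_f_R0 (fun i => k i * b i) 2 = 0.
Proof.
  set (vec := fun k0 k1 k2 : R => fun i : nat => match i with O => k0 | 1%nat => k1 | _ => k2 end).
  destruct (Req_dec (a 0%nat * b 1%nat - a 1%nat * b 0%nat) 0) as [Hd | Hd].
  - destruct (Req_dec (a 0%nat) 0) as [Ha0 | Ha0]; [destruct (Req_dec (a 1%nat) 0) as [Ha1 | Ha1] |].
    + destruct (Req_dec (b 0%nat) 0) as [Hb0 | Hb0]; [destruct (Req_dec (b 1%nat) 0) as [Hb1 | Hb1] |].
      * exists (vec 1 0 0); split; [exists 0%nat; split; [auto with arith | simpl; intro; lra] |].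
        simpl; rewrite Ha0, Hb0; split; ring.
      * exists (vec (b 1%nat) (- b 0%nat) 0); split; [exists 0%nat; split; [auto with arith | exact Hb1] |].
        simpl; rewrite Ha0, Ha1; split; ring.
      * exists (vec (b 1%nat) (- b 0%nat) 0).
        split; [exists 1%nat; split; [auto with arith | simpl; intro; apply Hb0; lra] |].
        simpl; rewrite Ha0, Ha1; split; ring.
    + exists (vec (a 1%nat) (- a 0%nat) 0); split; [exists 0%nat; split; [auto with arith | exact Ha1] |].
      simpl; split; lra.
    + exists (vec (a 1%nat) (- a 0%nat) 0).
      split; [exists 1%nat; split; [auto with arith | simpl; intro; apply Ha0; lra] |].
      simpl; split; lra.
  - exists (vec (a 1%nat * b 2%nat - a 2%nat * b 1%nat) (a 2%nat * b 0%nat - a 0%nat * b 2%nat)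
                (a 0%nat * b 1%nat - a 1%nat * b 0%nat)).
    split; [exists 2%nat; split; [auto with arith | exact Hd] |]; simpl; split; ring.
Qed.

Theorem corollary21 (A1 A2 : R -> R -> R) :
  in_class_L1hat A1 A2 -> dim_at_most (lie_symmetry A1 A2) 2.
Proof.
  intros HC Q HQ.
  set (D := fun i => cdata_of (Q i)).
  destruct (exists_injective_time A1 A2 HC) as [t0 Hinj].
  destruct (homogeneous_2x3_nontrivial (fun i => cT (D i) t0) (fun i => cc (D i))) as [k [Hk [HT Hc]]].
  exists k; split; [exact Hk |].
  assert (Hcl : classifying A1 A2 (cd_sum k D 2))
    by (apply classifying_sum; intros i Hi; apply (lie_symmetry_classified A1 A2 (Q i) HC (HQ i Hi))).
  assert (Hrep : represents (vf_sum k Q 2) (cd_sum k D 2))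
    by (apply represents_sum; intros i Hi; apply (lie_symmetry_classified A1 A2 (Q i) HC (HQ i Hi))).
  (* the sums in [dim_at_most] are, by conversion, the components of [vf_sum k Q 2] *)
  exact (represents_zero _ _ Hrep (Hinj _ Hcl HT Hc)).
Qed.
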